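(* For every positive integer $n\neq 4$, $\mathrm{ex}(n,M_2,P_4)=\mathcal{N}(M_2,D(3,n))$, and $\mathrm{ex}(4,M_2,P_4)=1$.
   Context: $M_2$ is the matching with two edges, $P_4$ the path on $4$ vertices (three edges). $D(k,n)$ is the graph on $n$ vertices consisting of $\lfloor n/k\rfloor$ vertex-disjoint copies of $K_k$ and a clique on the remaining $n-k\lfloor n/k\rfloor$ vertices. For graphs $H,G$, $\mathcal{N}(H,G)$ is the number of subgraphs of $G$ isomorphic to $H$, and $\mathrm{ex}(n,H,F)$ is the maximum of $\mathcal{N}(H,G)$ over $F$-free graphs $G$ on $n$ vertices. *)

From mathcomp Require Import all_boot.
Set Implicit Arguments. Unset Strict Implicit. Unset Printing Implicit Defensive.

Definition graph n := {set {set 'I_n}}.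

Definition simple_graph n (E : graph n) : bool :=
  [forall e in E, #|e| == 2].

Definition N_M2 n (E : graph n) : nat :=
  #|[set F in powerset E | (#|F| == 2) &&
       [forall e in F, forall f in F, (e != f) ==> [disjoint e & f]]]|.

Definition has_P4 n (E : graph n) : bool :=
  [exists a : 'I_n, exists b : 'I_n, exists c : 'I_n, exists d : 'I_n,
    [&& uniq [:: a; b; c; d], [set a; b] \in E, [set b; c] \in E
      & [set c; d] \in E]].

Definition P4_free n (E : graph n) : bool := ~~ has_P4 E.

Definition ex_M2_P4 n : nat :=
  \max_(E : graph n | simple_graph E && P4_free E) N_M2 E.

(* D(k,n): vertices i, j adjacent iff i <> j and they lie in the same block
   {k*q, ..., k*q+k-1}; this gives floor(n/k) disjoint K_k's and a clique on
   the remaining n - k*floor(n/k) vertices. *)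
Definition D k n : graph n :=
  [set e : {set 'I_n} | [exists i : 'I_n, exists j : 'I_n,
     [&& i != j, i %/ k == j %/ k & e == [set i; j]]]].

From mathcomp Require Import all_boot zify.
From Stdlib Require Import Lia.
Set Implicit Arguments. Unset Strict Implicit. Unset Printing Implicit Defensive.

(* Double counting shows 2 N(M_2, G) = m (m + 1) - sum_v d(v)^2 for every simple graph G
   with m edges.  In a P_4-free graph each vertex is isolated, a leaf, a degree-2 vertex
   of a triangle, or the centre of a star whose other vertices are all leaves.  Hence
   m <= n, with equality only for disjoint triangles, and when m = n - 1 and
   n = 1 (mod 3) some vertex has degree 0 or at least 3.  Together with
   sum_v (d(v) - 1) (d(v) - 2) >= 0 this bounds N(M_2, G) by N(M_2, D(3, n)), except
   for n = 4, where two disjoint edges beat a triangle and an isolated vertex. *)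

Lemma sum_nat_boolE (T : finType) (A P : pred T) :
  \sum_(x | A x) P x = #|[set x | A x && P x]|.
Proof.
rewrite -sum1dep_card big_mkcond [RHS]big_mkcond /=; apply: eq_bigr => x _.
by case: (A x); case: (P x).
Qed.

Lemma disjoint_set2 (T : finType) (x y : T) (A : {set T}) :
  [disjoint [set x; y] & A] = (x \notin A) && (y \notin A).
Proof. by rewrite disjoints_subset subUset !sub1set !inE. Qed.

Lemma double_bin2 q : 2 * 'C(q, 2) = q * q.-1.
Proof. by elim: q => // q IH; rewrite binS bin1 mulnDr IH; case: q {IH} => //= q; lia. Qed.

(** * Counting disjoint pairs of edges by degrees *)

Definition deg n (E : graph n) (v : 'I_n) := #|[set e in E | v \in e]|.

Definition disjoint_edges n (E : graph n) (e : {set 'I_n}) :=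
  [set f in E | [disjoint e & f]].

Definition M2_subgraphs n (E : graph n) := [set F in powerset E | (#|F| == 2) &&
  [forall e in F, forall f in F, (e != f) ==> [disjoint e & f]]].

Section Degrees.
Variables (n : nat) (E : graph n).

Lemma deg_sum v : deg E v = \sum_(e in E) (v \in e).
Proof. by rewrite sum_nat_boolE. Qed.

Lemma sum_deg_weighted (w : 'I_n -> nat) :
  \sum_v w v * deg E v = \sum_(e in E) \sum_(v in e) w v.
Proof.
under eq_bigr => v _ do rewrite deg_sum big_distrr /=.
rewrite exchange_big /=; apply: eq_bigr => e _.
rewrite [RHS]big_mkcond /=; apply: eq_bigr => v _.
by case: (v \in e); rewrite ?muln1 ?muln0.
Qed.

Hypothesis sE : simple_graph E.

Lemma card_edge e : e \in E -> #|e| = 2.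
Proof. by move/forall_inP: sE => /[apply] /eqP. Qed.

Lemma edge_neq x y : [set x; y] \in E -> x != y.
Proof. by move/card_edge; rewrite cards2; case: (x != y). Qed.

Lemma edge_at e v : e \in E -> v \in e -> exists2 u, u != v & e = [set v; u].
Proof.
move=> /card_edge /eqP /cards2P[x [y [xy ->]]] /set2P[] ->.
  by exists y; rewrite // eq_sym.
by exists x; rewrite // setUC.
Qed.

Lemma edge_disjoint_neq (e f : {set 'I_n}) : e \in E -> [disjoint e & f] -> e != f.
Proof.
by move=> eE; apply: contraTneq => <-; rewrite -setI_eq0 setIid -card_gt0 card_edge.
Qed.

Lemma handshake : \sum_v deg E v = 2 * #|E|.
Proof.
under eq_bigr => v _ do rewrite -[deg E v]mul1n.
rewrite sum_deg_weighted mulnC -sum_nat_const; apply: eq_bigr => e eE.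
by rewrite sum1_card card_edge.
Qed.

Lemma edges_le_sum_deg_sq : 2 * #|E| <= \sum_v deg E v ^ 2.
Proof.
rewrite -handshake; apply: leq_sum => v _.
by rewrite -mulnn; case: (deg E v) => // d; rewrite leq_pmull.
Qed.

Lemma edges_le_sum_deg_sq_vertices : 6 * #|E| <= \sum_v deg E v ^ 2 + 2 * n.
Proof.
have -> : 2 * n = \sum_(v : 'I_n) 2 by rewrite sum_nat_const card_ord mulnC.
rewrite -big_split -[6]/(3 * 2) -mulnA -handshake big_distrr; apply: leq_sum => v _ /=.
by rewrite -mulnn; case: (leqP 2 (deg E v)); nia.
Qed.

Lemma deg_nbrs v : deg E v = #|[set u | [set v; u] \in E]|.
Proof.
rewrite /deg.
have -> : [set e in E | v \in e] = [set [set v; u] | u in [set u | [set v; u] \in E]].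
  apply/setP => e; rewrite inE; apply/andP/imsetP => [[eE ve]|[u]].
    by have [u _ e_vu] := edge_at eE ve; exists u; rewrite // inE -e_vu.
  by rewrite inE => vuE ->; rewrite !inE eqxx.
apply: card_in_imset => u w; rewrite !inE => vuE _ vu_vw.
have /set2P[vu|//] : u \in [set v; w] by rewrite -vu_vw !inE eqxx orbT.
by move: (edge_neq vuE); rewrite vu eqxx.
Qed.

Lemma deg_add_disjoint x y : [set x; y] \in E ->
  deg E x + deg E y + #|disjoint_edges E [set x; y]| = #|E| + 1.
Proof.
move=> xyE; rewrite !deg_sum -sum_nat_boolE -!big_split /=.
rewrite (eq_bigr (fun f => 1 + (f == [set x; y]))); last first.
  move=> f fE; rewrite disjoint_set2.
  have [->|f_ne] := eqVneq f [set x; y]; first by rewrite !inE !eqxx orbT.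
  case xf: (x \in f); case yf: (y \in f) => //=.
  have [u _ f_xu] := edge_at fE xf.
  by move: yf f_ne; rewrite f_xu !inE eq_sym (negbTE (edge_neq xyE)) => /eqP->; rewrite eqxx.
rewrite big_split /= sum1_card sum_nat_boolE; congr (_ + _).
by apply/eqP/cards1P; exists [set x; y]; apply/setP => f; rewrite !inE andb_idl // => /eqP->.
Qed.

Lemma set2_M2_subgraphs e f : e \in E ->
  ([set e; f] \in M2_subgraphs E) = (f \in disjoint_edges E e).
Proof.
move=> eE; rewrite inE powersetE subUset !sub1set eE /= !inE.
case fE: (f \in E) => //=.
apply/andP/idP => [[card2 /forall_inP/(_ e)]|ef].
  rewrite !inE eqxx => /(_ isT) /forall_inP /(_ f); rewrite !inE eqxx orbT.
  move=> /(_ isT) /implyP; apply.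
  by move: card2; rewrite cards2; case: (e != f).
split; first by rewrite cards2 edge_disjoint_neq.
apply/forall_inP => g /set2P[]-> ; apply/forall_inP => h /set2P[]->;
  by rewrite ?eqxx ?(disjoint_sym f) ?ef ?implybT.
Qed.

Lemma M2_subgraphs_through e : e \in E ->
  [set F in M2_subgraphs E | e \in F] = [set [set e; f] | f in disjoint_edges E e].
Proof.
move=> eE; apply/setP => F; rewrite inE; apply/andP/imsetP => [[FM eF]|[f fD ->]].
  move: (FM); rewrite inE => /andP[_ /andP[/cards2P[a [b [_ F_ab]]] _]].
  have [f F_ef] : exists f, F = [set e; f].
    by move: eF; rewrite F_ab => /set2P[]->; [exists b | exists a; rewrite setUC].
  by exists f; rewrite // -set2_M2_subgraphs // -F_ef.
by split; [rewrite set2_M2_subgraphs | rewrite !inE eqxx].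
Qed.

Lemma sum_card_disjoint_edges : \sum_(e in E) #|disjoint_edges E e| = 2 * N_M2 E.
Proof.
have card_M2 F : F \in M2_subgraphs E -> 2 = \sum_(e in E) (e \in F).
  rewrite inE powersetE => /andP[FE /andP[/eqP <- _]].
  by rewrite sum_nat_boolE; apply: eq_card => e; rewrite inE andb_idl // => /(subsetP FE).
rewrite -[N_M2 E]/#|M2_subgraphs E| -sum1_card big_distrr /= (eq_bigr _ card_M2).
rewrite exchange_big /=; apply: eq_bigr => e eE.
rewrite sum_nat_boolE M2_subgraphs_through // card_in_imset // => f g fD gD ef_eg.
have /set2P[f_e|//] : f \in [set e; g] by rewrite -ef_eg !inE eqxx orbT.
by move: fD; rewrite inE f_e => /andP[_ /(edge_disjoint_neq eE)]; rewrite eqxx.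
Qed.

Lemma N_M2_sum_deg_sq : 2 * N_M2 E + \sum_v deg E v ^ 2 = #|E| * #|E| + #|E|.
Proof.
under eq_bigr => v _ do rewrite -mulnn.
rewrite -sum_card_disjoint_edges addnC sum_deg_weighted -big_split /=.
rewrite -mulnSr -sum_nat_const; apply: eq_bigr => e eE.
move/eqP: (card_edge eE) => /cards2P[x [y [xy e_xy]]].
have xyE : [set x; y] \in E by rewrite -e_xy.
by rewrite e_xy big_setU1 ?inE // big_set1 -addn1 -(deg_add_disjoint xyE).
Qed.

Lemma N_M2_gt0 e f : e \in E -> f \in disjoint_edges E e -> 0 < N_M2 E.
Proof.
move=> eE fD; rewrite -(ltn_pmul2l (isT : 0 < 2)) muln0 -sum_card_disjoint_edges.
by rewrite (bigD1 e) //= ltn_addr // card_gt0; apply/set0Pn; exists f.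
Qed.

End Degrees.

(** * Structure of P_4-free graphs *)

Definition in_triangle n (E : graph n) (v : 'I_n) :=
  [exists a, exists b, [&& [set v; a] \in E, [set v; b] \in E & [set a; b] \in E]].

Lemma in_triangleP n (E : graph n) v :
  reflect (exists a b, [/\ [set v; a] \in E, [set v; b] \in E & [set a; b] \in E])
          (in_triangle E v).
Proof.
apply: (iffP existsP) => [[a /existsP[b /and3P[va vb ab]]]|[a [b [va vb ab]]]].
  by exists a, b.
by exists a; apply/existsP; exists b; rewrite va vb ab.
Qed.

Definition star_center n (E : graph n) (v : 'I_n) := (1 < deg E v) && ~~ in_triangle E v.

Definition closed_nbhd n (E : graph n) (v : 'I_n) := [set u | (u == v) || ([set v; u] \in E)].

Section P4Free.
Variables (n : nat) (E : graph n).
Hypotheses (sE : simple_graph E) (pE : P4_free E).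

Lemma no_P4 a b c d : uniq [:: a; b; c; d] ->
  [set a; b] \in E -> [set b; c] \in E -> [set c; d] \in E -> False.
Proof.
move=> abcd ab bc cd; move/negP: pE; apply.
by apply/existsP; exists a; apply/existsP; exists b; apply/existsP; exists c;
   apply/existsP; exists d; rewrite abcd ab bc cd.
Qed.

Lemma triangle_nbr v a b c : [set v; a] \in E -> [set v; b] \in E -> [set a; b] \in E ->
  [set v; c] \in E -> c = a \/ c = b.
Proof.
move=> va vb ab vc; have [->|ca] := eqVneq c a; first by left.
have [->|cb] := eqVneq c b; first by right.
exfalso; apply: (@no_P4 c v a b) => //; last by rewrite setUC.
by rewrite /= !inE !negb_or (eq_sym c v) ca cb !(edge_neq sE).
Qed.

Lemma nbrs_triangle v a b : [set v; a] \in E -> [set v; b] \in E -> [set a; b] \in E ->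
  [set u | [set v; u] \in E] = [set a; b].
Proof.
move=> va vb ab; apply/setP => u; rewrite in_set.
by apply/idP/set2P => [/(triangle_nbr va vb ab)|[] ->].
Qed.

Lemma deg_triangle v : in_triangle E v -> deg E v = 2.
Proof.
move=> /in_triangleP[a [b [va vb ab]]].
by rewrite deg_nbrs // (nbrs_triangle va vb ab) cards2 (edge_neq sE ab).
Qed.

Lemma closed_nbhd_triangle v a b : [set v; a] \in E -> [set v; b] \in E -> [set a; b] \in E ->
  closed_nbhd E v = [set v; a; b].
Proof.
move=> va vb ab; apply/setP => u; move/setP/(_ u): (nbrs_triangle va vb ab).
by rewrite !inE => ->; rewrite orbA.
Qed.

Lemma triangle_block x a b : [set x; a] \in E -> [set x; b] \in E -> [set a; b] \in E ->
  {in [set x; a; b], forall y, in_triangle E y /\ closed_nbhd E y = [set x; a; b]}.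
Proof.
move=> xa xb ab y; rewrite !inE -orbA => /or3P[] /eqP ->.
- by split; [apply/in_triangleP; exists a, b | apply: closed_nbhd_triangle].
- have ax : [set a; x] \in E by rewrite setUC.
  split; first by apply/in_triangleP; exists x, b.
  rewrite (closed_nbhd_triangle ax ab xb); apply/setP => u; rewrite !inE.
  by case: (u == a); case: (u == x).
- have bx : [set b; x] \in E by rewrite setUC.
  have ba : [set b; a] \in E by rewrite setUC.
  split; first by apply/in_triangleP; exists x, a.
  rewrite (closed_nbhd_triangle bx ba xa); apply/setP => u; rewrite !inE.
  by case: (u == a); case: (u == x); case: (u == b).
Qed.

(* The closed neighbourhood of a triangle vertex is its triangle, so grouping triangle
   vertices by closed neighbourhood yields blocks of size 3. *)
Lemma dvdn_card_triangle : 3 %| #|[set v | in_triangle E v]|.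
Proof.
set T := [set v | in_triangle E v].
rewrite (card_partition (preim_partitionP (closed_nbhd E) T)).
rewrite (eq_bigr (fun _ => 3)) ?sum_nat_const ?dvdn_mull // => B /imsetP[x].
rewrite inE => /in_triangleP[a [b [xa xb ab]]] ->.
have xab := triangle_block xa xb ab.
have [_ Nx] : in_triangle E x /\ closed_nbhd E x = [set x; a; b].
  by apply: xab; rewrite !inE eqxx.
have -> : [set y in T | closed_nbhd E x == closed_nbhd E y] = [set x; a; b].
  apply/setP => y; rewrite inE; apply/andP/idP => [[_ /eqP Nxy]|/xab[Ty Ny]].
    by rewrite -Nx Nxy inE eqxx.
  by rewrite inE Ty Nx Ny.
rewrite -setUA cardsU1 cards2 (edge_neq sE ab) !inE negb_or !(edge_neq sE) //.
Qed.

Lemma other_nbr u v : 1 < deg E u -> exists2 w, [set u; w] \in E & w != v.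
Proof.
move=> d_gt1; have : 0 < #|[set w | [set u; w] \in E] :\ v|.
  by move: d_gt1; rewrite (deg_nbrs sE) (cardsD1 v); case: (v \in _) => /=; lia.
by rewrite card_gt0 => /set0Pn[w]; rewrite !inE => /andP[wv uw]; exists w.
Qed.

Lemma triangle_of_edge u v : [set u; v] \in E -> 1 < deg E u -> 1 < deg E v ->
  in_triangle E u.
Proof.
move=> uv /(other_nbr v)[w uw wv] /(other_nbr u)[x vx xu].
have [wx|wx] := eqVneq w x; first by apply/in_triangleP; exists v, w; rewrite wx in uw *.
exfalso; apply: (@no_P4 w u v x) => //; last by rewrite setUC.
by rewrite /= !inE !negb_or wv wx (eq_sym w u) (eq_sym u x) xu !(edge_neq sE).
Qed.

Lemma star_center_leaf x y : [set x; y] \in E -> star_center E x -> deg E y = 1.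
Proof.
move=> xy /andP[dx tx]; apply/eqP; rewrite eqn_leq; apply/andP; split.
  by rewrite leqNgt; apply: contra tx; apply: triangle_of_edge xy dx.
by rewrite card_gt0; apply/set0Pn; exists [set x; y]; rewrite !inE xy eqxx orbT.
Qed.

(* Counted edge by edge: the other end of an edge at a star centre is a leaf. *)
Lemma sum_star_center_deg :
  \sum_v star_center E v * deg E v <= \sum_v (deg E v == 1).
Proof.
have -> : \sum_v (deg E v == 1) = \sum_v (deg E v == 1) * deg E v.
  by apply: eq_bigr => v _; case: eqP => [->|].
rewrite !sum_deg_weighted; apply: leq_sum => e eE.
move/eqP: (card_edge sE eE) => /cards2P[x [y [xy e_xy]]].
have exy : [set x; y] \in E by rewrite -e_xy.
have eyx : [set y; x] \in E by rewrite setUC.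
rewrite e_xy !big_setU1 ?inE // !big_set1.
move: (star_center_leaf exy) (star_center_leaf eyx); rewrite /star_center.
case: (in_triangle E x); case: (in_triangle E y);
  case: (deg E x) => [|[|dx]]; case: (deg E y) => [|[|dy]] //= lx ly;
  by [have := lx isT | have := ly isT].
Qed.

Lemma vertex_type v :
  [/\ (deg E v == 0) + (deg E v == 1) + in_triangle E v + star_center E v = 1,
      deg E v = (deg E v == 1) + 2 * in_triangle E v + star_center E v * deg E v &
      deg E v ^ 2 = (deg E v == 1) + 4 * in_triangle E v + star_center E v * deg E v ^ 2].
Proof.
rewrite /star_center; case: (boolP (in_triangle E v)) => [/deg_triangle -> //|_].
by case: (deg E v) => [|[|d]]; rewrite ?mul1n.
Qed.

Lemma P4_free_edge_count :
  [/\ #|E| <= n, #|E| = n -> n %% 3 = 0 &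
      #|E|.+1 = n -> n %% 3 = 1 -> 6 * #|E| + 2 <= \sum_v deg E v ^ 2 + 2 * n].
Proof.
pose isolated := \sum_v (deg E v == 0); pose leaves := \sum_v (deg E v == 1).
pose tri := \sum_v in_triangle E v; pose centers := \sum_v star_center E v.
pose cdeg := \sum_v star_center E v * deg E v.
pose cdeg_sq := \sum_v star_center E v * deg E v ^ 2.
have count_n : n = isolated + leaves + tri + centers.
  rewrite -{1}(card_ord n) -sum1_card -!big_split /=.
  by apply: eq_bigr => v _; case: (vertex_type v).
have count_m : 2 * #|E| = leaves + 2 * tri + cdeg.
  rewrite -handshake // !big_distrr -!big_split /=.
  by apply: eq_bigr => v _; case: (vertex_type v).
have count_sq : \sum_v deg E v ^ 2 = leaves + 4 * tri + cdeg_sq.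
  rewrite !big_distrr -!big_split /=.
  by apply: eq_bigr => v _; case: (vertex_type v).
have cdeg_ge : 2 * centers <= cdeg.
  rewrite big_distrr; apply: leq_sum => v _.
  by case/boolP: (star_center E v) => [/andP[d_gt1 _]|]; rewrite /= ?muln1 ?mul1n ?muln0.
have cdeg_sq_ge : 5 * cdeg <= cdeg_sq + 6 * centers.
  rewrite !big_distrr -big_split; apply: leq_sum => v _ /=.
  case: (star_center E v); rewrite /= ?mul1n ?mul0n ?muln1 // -mulnn.
  by case: (leqP 3 (deg E v)); nia.
have cdeg_le : cdeg <= leaves := sum_star_center_deg.
have cdeg0 : centers = 0 -> cdeg = 0.
  move/eqP; rewrite sum_nat_eq0 => /forallP c0; apply/eqP; rewrite sum_nat_eq0.
  by apply/forallP => v; rewrite (eqP (c0 v)).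
have [a tri3] : exists a, tri = 3 * a.
  have /dvdnP[a ->] : 3 %| tri by rewrite /tri sum_nat_boolE; apply: dvdn_card_triangle.
  by exists a; rewrite mulnC.
rewrite count_sq; clearbody isolated leaves tri centers cdeg cdeg_sq.
by split=> [|mn|mn r1]; lia.
Qed.

End P4Free.

Section CountingArithmetic.
Variables n m N D2 : nat.
Hypotheses (M2_D2 : 2 * N + D2 = m * m + m) (D2_ge : 2 * m <= D2).
Hypotheses (D2_ge_vertices : 6 * m <= D2 + 2 * n) (m_le_n : m <= n).
Hypotheses (m_eq_n : m = n -> n %% 3 = 0)
           (m_pred_n : m.+1 = n -> n %% 3 = 1 -> 6 * m + 2 <= D2 + 2 * n).

Lemma M2_count_bound :
  N <= if n == 4 then 1 else 9 * 'C(n %/ 3, 2) + 3 * (n %/ 3) * 'C(n %% 3, 2).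
Proof.
have [n4|n4] := eqVneq n 4.
  subst n; have [m4|[m3|m2]] : m = 4 \/ m = 3 \/ m <= 2 by lia.
  - by have := m_eq_n m4.
  - have := m_pred_n (congr1 S m3) erefl; nia.
  - nia.
rewrite -(leq_pmul2l (isT : 0 < 2)) mulnDr mulnCA [2 * (_ * _)]mulnCA !double_bin2.
have en : n = 3 * (n %/ 3) + n %% 3 by rewrite mulnC -divn_eq.
move: m_eq_n m_pred_n en; have : n %% 3 < 3 by rewrite ltn_mod.
case: (n %% 3) => [|[|[|//]]] _; set q := n %/ 3 => meq mpred en /=.
- have [mn|mn] : m = n \/ m < n by lia. nia. nia.
- have [mn|[mn|mn]] : m = n \/ m.+1 = n \/ m.+1 < n by lia.
  + by have := meq mn.
  + have := mpred mn erefl; nia.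
  + nia.
- have [mn|[mn|mn]] : m = n \/ m.+1 = n \/ m.+1 < n by lia.
  + by have := meq mn.
  + nia.
  + nia.
Qed.

End CountingArithmetic.

Lemma N_M2_P4_free_le n (E : graph n) : simple_graph E -> P4_free E ->
  N_M2 E <= if n == 4 then 1 else 9 * 'C(n %/ 3, 2) + 3 * (n %/ 3) * 'C(n %% 3, 2).
Proof.
move=> sE pE; have [m_le_n m_eq_n m_pred_n] := P4_free_edge_count sE pE.
exact: M2_count_bound (N_M2_sum_deg_sq sE) (edges_le_sum_deg_sq sE)
  (edges_le_sum_deg_sq_vertices sE) m_le_n m_eq_n m_pred_n.
Qed.

(** * The graphs D(k, n) *)

Lemma D_edge k n (x y : 'I_n) :
  ([set x; y] \in D k n) = (x != y) && (x %/ k == y %/ k).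
Proof.
rewrite inE; apply/existsP/andP => [[i /existsP[j /and3P[ij ij_k /eqP xy_ij]]]|[xy xy_k]].
  have xy : x != y.
    by move: (cards2 x y) (cards2 i j); rewrite xy_ij ij => -> []; case: (x != y).
  split=> //; move: xy.
  have : x \in [set i; j] by rewrite -xy_ij !inE eqxx.
  have : y \in [set i; j] by rewrite -xy_ij !inE eqxx orbT.
  by move=> /set2P[] -> /set2P[] ->; rewrite ?eqxx // => _; rewrite eq_sym.
by exists x; apply/existsP; exists y; rewrite xy xy_k eqxx.
Qed.

Lemma D_simple k n : simple_graph (D k n).
Proof.
apply/forall_inP => e; rewrite inE => /existsP[i /existsP[j /and3P[ij _ /eqP ->]]].
by rewrite cards2 ij.
Qed.

Lemma D_P4_free k n : 0 < k <= 3 -> P4_free (D k n).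
Proof.
move=> k_le3; apply/negP => /existsP[a /existsP[b /existsP[c /existsP[d]]]].
rewrite !D_edge => /and4P[abcd /andP[_ /eqP ab] /andP[_ /eqP bc] /andP[_ /eqP cd]].
move: abcd; rewrite /= !inE !negb_or -!val_eqE /=.
move=> /and4P[/and3P[/eqP ? /eqP ? /eqP ?] /andP[/eqP ? /eqP ?] /eqP ? _].
by move: k_le3 ab bc cd; case: k => [|[|[|[|]]]] //; lia.
Qed.

Lemma sum_block n b : \sum_(0 <= u < n) (u %/ 3 == b) = minn n (3 * b + 3) - 3 * b.
Proof.
elim: n => [|n IH]; first by rewrite big_geq // min0n.
by rewrite big_nat_recr //= IH; case: eqP; lia.
Qed.

Lemma deg_D3 n (v : 'I_n) : deg (D 3 n) v = minn n (3 * (v %/ 3) + 3) - 3 * (v %/ 3) - 1.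
Proof.
rewrite deg_nbrs ?D_simple //.
have -> : [set u | [set v; u] \in D 3 n] = [set u : 'I_n | u %/ 3 == v %/ 3] :\ v.
  by apply/setP => u; rewrite [LHS]in_set D_edge in_setD1 in_set eq_sym (eq_sym (v %/ 3)).
by rewrite -sum_block big_mkord sum_nat_boolE [in RHS](cardsD1 v) !inE eqxx /= addKn.
Qed.

Lemma sum_deg_D3 n (h : nat -> nat) :
  \sum_v h (deg (D 3 n) v) = 3 * (n %/ 3) * h 2 + n %% 3 * h (n %% 3).-1.
Proof.
pose g v := h (minn n (3 * (v %/ 3) + 3) - 3 * (v %/ 3) - 1).
rewrite (eq_bigr (fun v : 'I_n => g v)) => [|v _]; last by rewrite deg_D3.
rewrite -(big_mkord xpredT) (@big_cat_nat _ _ _ (3 * (n %/ 3))) //=; last by lia.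
rewrite [X in X + _](@eq_big_nat _ _ _ _ _ _ (fun=> h 2)) => [|v /andP[_ v_lt]]; last first.
  by rewrite /g; congr h; lia.
rewrite [X in _ + X](@eq_big_nat _ _ _ _ _ _ (fun=> h (n %% 3).-1)); last first.
  by move=> v /andP[v_ge v_lt]; rewrite /g; congr h; lia.
by rewrite !sum_nat_const_nat subn0; congr (_ + _ * _); lia.
Qed.

(* Two edges from distinct triangles, or a triangle edge and the edge of a leftover K_2. *)
Lemma N_M2_D3 n : N_M2 (D 3 n) = 9 * 'C(n %/ 3, 2) + 3 * (n %/ 3) * 'C(n %% 3, 2).
Proof.
have sD := D_simple 3 n.
have sq_eq := N_M2_sum_deg_sq sD; rewrite (sum_deg_D3 n (fun d => d ^ 2)) in sq_eq.
have m_eq := handshake sD; rewrite (sum_deg_D3 n id) in m_eq.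
apply/eqP; rewrite -(eqn_pmul2l (isT : 0 < 2)) mulnDr mulnCA [2 * (_ * _)]mulnCA.
rewrite !double_bin2; apply/eqP; move: sq_eq m_eq; have : n %% 3 < 3 by rewrite ltn_mod.
by case: (n %% 3) => [|[|[|//]]] _ /=; nia.
Qed.

Lemma N_M2_D24 : 0 < N_M2 (D 2 4).
Proof.
pose o i (i_lt4 : i < 4) : 'I_4 := Ordinal i_lt4.
apply: (@N_M2_gt0 _ _ (D_simple 2 4) [set o 0 isT; o 1 isT] [set o 2 isT; o 3 isT]).
  by rewrite D_edge.
by rewrite inE D_edge disjoint_set2 !inE.
Qed.

Lemma ex_M2_P4_eq n N (E0 : graph n) : simple_graph E0 -> P4_free E0 -> N <= N_M2 E0 ->
  (forall E : graph n, simple_graph E -> P4_free E -> N_M2 E <= N) -> ex_M2_P4 n = N.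
Proof.
move=> sE0 pE0 N_le le_N; apply/eqP; rewrite eqn_leq; apply/andP; split.
  by apply/bigmax_leqP => E /andP[]; apply: le_N.
by apply: leq_trans N_le (leq_bigmax_cond _ _); rewrite sE0 pE0.
Qed.

Theorem proposition3p6 :
  (forall n : nat, 0 < n -> n != 4 -> ex_M2_P4 n = N_M2 (D 3 n)) /\
  ex_M2_P4 4 = 1.
Proof.
split=> [n _ n_ne4|].
  apply: ex_M2_P4_eq (D_simple 3 n) (@D_P4_free 3 n isT) (leqnn _) _ => E sE pE.
  by move: (N_M2_P4_free_le sE pE); rewrite (negbTE n_ne4) N_M2_D3.
apply: ex_M2_P4_eq (D_simple 2 4) (@D_P4_free 2 4 isT) N_M2_D24 _ => E sE pE.
exact: N_M2_P4_free_le sE pE.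
Qed.
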